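(* Let $L$ be an integer, $a,b$ divisors of $L$, $M=L/b$, and let $\mathbf g\in\mathbb C^L$ (indexed $L$-periodically) be a window such that $$K_{\mathbf g}:=\frac1b\min_{t\in\{0,\dots,M-1\}}\left(\sum_{k=0}^{b-1}|g[t+kM]|^2\right)>0.$$ Let $\mathcal S_{\mathbf X}[k]\ge 0$ be a power spectrum, $\sigma_0^2>0$, $\delta\in\mathbb R$, and let $C_{\mathbf G}$ be the $M\times M$ matrix $$C_{\mathbf G}[m,m']=C_{\mathcal G_{\mathbf Z}}[m-\delta,m'-\delta]+C_{\mathcal G_{\mathbf N}}[m,m'],$$ where $C_{\mathcal G_{\mathbf Z}}[\mu,\mu']=\sum_{k\in I^+}\mathcal S_{\mathbf X}[k]\,\overline{\hat g}(k-\mu b)\,\hat g(k-\mu'b)$ and $C_{\mathcal G_{\mathbf N}}[m,m']=\sigma_0^2\sum_{k=0}^{L-1}\overline{\hat g}[k]\hat g[k-(m'-m)b]$ (i.e. the covariance matrix of a fixed-time slice of the Gabor transform of a frequency-shifted wide-sense stationary analytic signal plus circular complex white Gaussian noise of variance $\sigma_0^2$). Then for all $\mathbf x\in\mathbb C^M$, $$\langle C_{\mathbf G}\mathbf x,\mathbf x\rangle\ge \sigma_0^2K_{\mathbf g}\|\mathbf x\|^2,$$ and $C_{\mathbf G}$ is therefore boundedly invertible.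
   Context: $\hat g(\xi)=\sum_{t=0}^{L-1}g[t]e^{-2i\pi\xi t/L}$ is the DFT of $\mathbf g$, evaluated at a possibly non-integer frequency $\xi$; $I^+=\{k:0\le k<L/2\}$ is the set of positive frequency indices. $\langle\cdot,\cdot\rangle$ is the standard Hermitian inner product on $\mathbb C^M$. *)

From HB Require Import structures.
From mathcomp Require Import all_boot all_order all_algebra.
From mathcomp Require Import reals trigo.
From mathcomp Require Import complex.
Set Implicit Arguments. Unset Strict Implicit. Unset Printing Implicit Defensive.
Import Order.TTheory GRing.Theory Num.Theory.
Local Open Scope ring_scope.
Local Open Scope complex_scope.

Section GaborDefs.
Variable R : realType.
Local Notation C := R[i].

Definition expi (theta : R) : C := (cos theta) +i* (sin theta).

Definition ghat (L : nat) (g : nat -> C) (xi : R) : C :=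
  \sum_(t < L) g t * expi (- (2 * pi * xi * t%:R / L%:R)).

Definition Kg (L b : nat) (g : nat -> C) : R :=
  let M := (L %/ b)%N in
  let F := fun t : nat => \sum_(k < b) ComplexField.Normc.normc (g (t + k * M)%N) ^+ 2 in
  (b%:R)^-1 * \big[Num.min/F 0%N]_(t < M) F t.

(* C_{G_Z}[mu, mu'] = sum_{k in I^+} S[k] conj(ghat(k - mu b)) ghat(k - mu' b),
   I^+ = {k : 0 <= k < L/2} *)
Definition CZ (L b : nat) (S : nat -> R) (g : nat -> C) (mu mu' : R) : C :=
  \sum_(k < L | (2 * k < L)%N)
     (S k)%:C * (ghat L g (k%:R - mu * b%:R))^* * ghat L g (k%:R - mu' * b%:R).

Definition CN (L b : nat) (sigma0 : R) (g : nat -> C) (m m' : nat) : C :=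
  (sigma0 ^+ 2)%:C *
  \sum_(k < L) (ghat L g k%:R)^* * ghat L g (k%:R - (m'%:R - m%:R) * b%:R).

Definition CG (L b : nat) (S : nat -> R) (sigma0 delta : R) (g : nat -> C)
  : 'M[C]_(L %/ b) :=
  \matrix_(m < L %/ b, m' < L %/ b)
    (CZ L b S g (m%:R - delta) (m'%:R - delta) + CN L b sigma0 g m m').

End GaborDefs.

(* Write [N = sum_i |x_i|^2].  The form <C_G x, x> is the sum of a signal part,
   sum_{k in I^+} S[k] |A_k|^2 >= 0, and a noise part.  Orthogonality of the
   characters of Z/LZ turns the noise part into
   sigma0^2 L sum_t |g[t]|^2 |Y[t]|^2, where Y is the inverse DFT of length M of x,
   an M-periodic sequence.  Grouping t by residues mod M produces the weights
   sum_k |g[r + kM]|^2 >= b K_g, and Parseval gives sum_{r<M} |Y[r]|^2 = M N, so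
   the noise part is at least sigma0^2 K_g L^2 N (the DFT is unnormalised).
   A coercive matrix has trivial kernel, hence is invertible. *)

From mathcomp Require Import all_boot all_order all_algebra.
From mathcomp Require Import reals trigo.
From mathcomp Require Import complex.
From mathcomp Require Import ring lra.
Set Implicit Arguments.
Unset Strict Implicit.
Unset Printing Implicit Defensive.
Import Order.TTheory GRing.Theory Num.Theory.
Local Open Scope complex_scope.
Local Open Scope ring_scope.

Lemma unity_root_sum_eq0 (F : idomainType) (w : F) n :
  w ^+ n = 1 -> w != 1 -> \sum_(k < n) w ^+ k = 0.
Proof.
move=> wn w_neq1; apply/eqP.
have /eqP := subrX1 w n; rewrite wn subrr eq_sym mulf_eq0 subr_eq0.
by rewrite (negbTE w_neq1).
Qed.

Lemma sum_ord_residues (V : nmodType) L b M (f : nat -> V) : L = (b * M)%N ->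
  \sum_(t < L) f t = \sum_(r < M) \sum_(k < b) f (r + k * M)%N.
Proof.
move=> ->; elim: b => [|b IH].
  by rewrite mul0n big_ord0 big1 // => r _; rewrite big_ord0.
rewrite mulSnr big_split_ord /= IH -big_split /=.
by apply: eq_bigr => r _; rewrite big_ord_recr addnC.
Qed.

Lemma unitmx_ker0 (F : fieldType) n (A : 'M[F]_n) :
  (forall x : 'cV_n, A *m x = 0 -> x = 0) -> A \in unitmx.
Proof.
move=> ker0; rewrite unitmxE unitfE -det_tr; apply/negP => /det0P[v v_neq0 vA0].
have /ker0/(congr1 trmx) : A *m v^T = 0 by rewrite -[A]trmxK -trmx_mul vA0 trmx0.
by rewrite trmxK trmx0; apply/eqP.
Qed.

Section ComplexExponential.
Variable R : realType.
Local Notation C := R[i].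

Lemma expiD (a b : R) : expi (a + b) = expi a * expi b.
Proof. by rewrite /expi cosD sinD /=; congr Complex; ring. Qed.

Lemma expi0 : expi (0 : R) = 1.
Proof. by rewrite /expi cos0 sin0. Qed.

Lemma expiN (a : R) : expi (- a) = (expi a)^*.
Proof. by rewrite /expi cosN sinN. Qed.

Lemma expiMn (a : R) n : expi a ^+ n = expi (n%:R * a).
Proof.
elim: n => [|n IH]; first by rewrite expr0 mul0r expi0.
by rewrite exprS IH -expiD mulrSr mulrDl mul1r addrC.
Qed.

Lemma expi_2pi_nat n : expi (2 * pi * n%:R) = 1 :> C.
Proof.
elim: n => [|n IH]; first by rewrite mulr0 expi0.
rewrite -[n.+1]addn1 natrD mulrDr mulr1 expiD IH mul1r.
by rewrite /expi [2 * _]mulrC mulr_natr cos2pi sin2pi.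
Qed.

Lemma expi_neq1 (a : R) : 0 < a < pi *+ 2 -> expi a != 1.
Proof.
move=> /andP[a_gt0 a_lt2pi]; apply/eqP => ea1.
have : expi (a / 2) * expi (a / 2) = 1 by rewrite -expiD -ea1; congr expi; field.
rewrite /expi /= => -[cos_a _].
have : 0 < sin (a / 2) by apply: sin_gt0_pi; apply/andP; split; lra.
have := cos2Dsin2 (a / 2); nra.
Qed.

Lemma sum_expi_orth n (s t : 'I_n) :
  \sum_(k < n) expi (2 * pi * k%:R * (s%:R - t%:R) / n%:R) = (s == t)%:R * n%:R :> C.
Proof.
have n_gt0 : (0 < n)%N by case: n s t => [[]|].
have nR_neq0 : (n%:R : R) != 0 by rewrite pnatr_eq0 -lt0n.
have [<-|s_neq_t] := eqVneq; last rewrite mul0r.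
  under eq_bigr do rewrite subrr mulr0 mul0r expi0.
  by rewrite sumr_const card_ord mul1r.
have pi_gt0 := @pi_gt0 R.
have root_neq1 (u v : 'I_n) : (v < u)%N ->
    expi (2 * pi * (u%:R - v%:R) / n%:R) != 1 :> C.
  move=> lt_vu; have [v_lt_u u_lt_n] : (v%:R : R) < u%:R /\ (u%:R : R) < n%:R.
    by rewrite !ltr_nat.
  apply: expi_neq1; rewrite divr_gt0 ?ltr0n //=; last by nra.
  by rewrite ltr_pdivrMr ?ltr0n //; have := ler0n R v; nra.
pose w : C := expi (2 * pi * (s%:R - t%:R) / n%:R).
have -> : \sum_(k < n) expi (2 * pi * k%:R * (s%:R - t%:R) / n%:R) = \sum_(k < n) w ^+ k.
  by apply: eq_bigr => k _; rewrite expiMn; congr expi; field.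
apply: unity_root_sum_eq0.
  rewrite expiMn (_ : _ * _ = 2 * pi * s%:R + - (2 * pi * t%:R)); last by field.
  by rewrite expiD expiN !expi_2pi_nat conjC1 mulr1.
have [lt_ts|lt_st|eq_ts] := ltngtP t s; first exact: root_neq1.
  apply: contraNneq (root_neq1 _ _ lt_st) => w1.
  have : w * expi (2 * pi * (t%:R - s%:R) / n%:R) = 1.
    by rewrite -expiD -expi0; congr expi; field.
  by rewrite w1 mul1r => ->.
by move/val_inj: eq_ts s_neq_t => ->; rewrite eqxx.
Qed.

Lemma sum_expi_orth_diag n (f : 'I_n -> 'I_n -> C) :
  \sum_(k < n) \sum_(s < n) \sum_(t < n)
      f s t * expi (2 * pi * k%:R * (s%:R - t%:R) / n%:R) =
  n%:R * \sum_(s < n) f s s.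
Proof.
rewrite exchange_big mulr_sumr; apply: eq_bigr => s _ /=.
rewrite exchange_big /=.
under eq_bigr do rewrite -mulr_sumr sum_expi_orth.
rewrite (bigD1 s) //= big1 ?addr0 => [|t ts].
  by rewrite eqxx mul1r mulrC.
by rewrite eq_sym (negbTE ts) mul0r mulr0.
Qed.

End ComplexExponential.

Section GaborCovariance.
Variable R : realType.
Local Notation C := R[i].
Implicit Types (L b : nat) (g : nat -> C).

Lemma sum_ghat_corr L g (d : R) : (0 < L)%N ->
  \sum_(k < L) (ghat L g k%:R)^* * ghat L g (k%:R - d) =
  L%:R * \sum_(t < L) g t * (g t)^* * expi (2 * pi * d * t%:R / L%:R).
Proof.
move=> L_gt0; have LR_neq0 : (L%:R : R) != 0 by rewrite pnatr_eq0 -lt0n.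
rewrite -(@sum_expi_orth_diag R L
  (fun s t : 'I_L => g t * (g s)^* * expi (2 * pi * d * t%:R / L%:R))).
apply: eq_bigr => k _; rewrite /ghat rmorph_sum mulr_suml; apply: eq_bigr => s _.
rewrite mulr_sumr; apply: eq_bigr => t _.
rewrite rmorphM /= -expiN opprK mulrACA [(g s)^* * _]mulrC -!mulrA -!expiD.
by congr (_ * (_ * expi _)); field.
Qed.

(* For [L = b * M] this is the inverse DFT of length [M] of [x]. *)
Definition idft L b n (x : 'cV[C]_n) (t : nat) : C :=
  \sum_(j < n) x j 0 * expi (2 * pi * (j%:R * b%:R) * t%:R / L%:R).

Lemma idft_sqr L b n (x : 'cV[C]_n) t : (0 < L)%N ->
  idft L b x t * (idft L b x t)^* = \sum_(i < n) \sum_(j < n)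
    x j 0 * (x i 0)^* * expi (2 * pi * ((j%:R - i%:R) * b%:R) * t%:R / L%:R).
Proof.
move=> L_gt0; have LR_neq0 : (L%:R : R) != 0 by rewrite pnatr_eq0 -lt0n.
rewrite mulrC /idft rmorph_sum mulr_suml; apply: eq_bigr => i _.
rewrite mulr_sumr; apply: eq_bigr => j _.
rewrite rmorphM /= -expiN mulrACA -expiD [(x i 0)^* * _]mulrC.
by congr (_ * expi _); field.
Qed.

Lemma idft_periodic L b M n (x : 'cV[C]_n) r k :
  L = (b * M)%N -> (0 < L)%N -> idft L b x (r + k * M) = idft L b x r.
Proof.
move=> ->; rewrite muln_gt0 => /andP[b_gt0 M_gt0].
have [bR_neq0 MR_neq0] : (b%:R : R) != 0 /\ (M%:R : R) != 0.
  by rewrite !pnatr_eq0 -!lt0n.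
apply: eq_bigr => j _; congr (_ * _).
rewrite (_ : _ / _ = 2 * pi * (j%:R * b%:R) * r%:R / (b * M)%:R + 2 * pi * (j * k)%:R).
  by rewrite expiD expi_2pi_nat mulr1.
by rewrite !natrD !natrM; field; rewrite bR_neq0 MR_neq0.
Qed.

Lemma idft_parseval L b M (x : 'cV[C]_M) : L = (b * M)%N -> (0 < L)%N ->
  \sum_(r < M) idft L b x r * (idft L b x r)^* =
  M%:R * \sum_(j < M) x j 0 * (x j 0)^*.
Proof.
move=> -> L_gt0; move: (L_gt0); rewrite muln_gt0 => /andP[b_gt0 M_gt0].
have [bR_neq0 MR_neq0] : (b%:R : R) != 0 /\ (M%:R : R) != 0.
  by rewrite !pnatr_eq0 -!lt0n.
rewrite -(@sum_expi_orth_diag R M (fun s t => x s 0 * (x t 0)^*)).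
apply: eq_bigr => r _; rewrite idft_sqr // exchange_big.
apply: eq_bigr => j _; apply: eq_bigr => i _; congr (_ * expi _).
by rewrite natrM; field; rewrite bR_neq0 MR_neq0.
Qed.

Lemma quad_CN L b s0 g n (x : 'cV[C]_n) : (0 < L)%N ->
  \sum_(i < n) \sum_(j < n) CN L b s0 g i j * x j 0 * (x i 0)^* =
  (s0 ^+ 2)%:C * (L%:R *
    \sum_(t < L) g t * (g t)^* * (idft L b x t * (idft L b x t)^*)).
Proof.
move=> L_gt0; rewrite /CN.
transitivity (\sum_(i < n) \sum_(j < n) \sum_(t < L) (s0 ^+ 2)%:C * (L%:R *
  (g t * (g t)^* * (x j 0 * (x i 0)^* *
     expi (2 * pi * ((j%:R - i%:R) * b%:R) * t%:R / L%:R))))).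
  apply: eq_bigr => i _; apply: eq_bigr => j _.
  by rewrite sum_ghat_corr // !mulr_sumr !mulr_suml; apply: eq_bigr => t _; ring.
under eq_bigr do rewrite exchange_big /=.
rewrite exchange_big /= !mulr_sumr; apply: eq_bigr => t _.
rewrite idft_sqr // !mulr_sumr; apply: eq_bigr => i _.
by rewrite !mulr_sumr.
Qed.

Lemma quad_CZ_ge0 L b S g delta n (x : 'cV[C]_n) : (forall k, 0 <= S k) ->
  0 <= \sum_(i < n) \sum_(j < n)
         CZ L b S g (i%:R - delta) (j%:R - delta) * x j 0 * (x i 0)^*.
Proof.
move=> S_ge0.
pose A k := \sum_(j < n) ghat L g (k%:R - (j%:R - delta) * b%:R) * x j 0.
have -> : \sum_(i < n) \sum_(j < n)
    CZ L b S g (i%:R - delta) (j%:R - delta) * x j 0 * (x i 0)^*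
  = \sum_(k < L | (2 * k < L)%N) (S k)%:C * (A k * (A k)^*).
  transitivity (\sum_(i < n) \sum_(j < n) \sum_(k < L | (2 * k < L)%N) (S k)%:C *
    ((ghat L g (k%:R - (i%:R - delta) * b%:R) * x i 0)^* *
     (ghat L g (k%:R - (j%:R - delta) * b%:R) * x j 0))).
    apply: eq_bigr => i _; apply: eq_bigr => j _.
    by rewrite /CZ !mulr_suml; apply: eq_bigr => k _; rewrite rmorphM /=; ring.
  under eq_bigr do rewrite exchange_big /=.
  rewrite exchange_big; apply: eq_bigr => k _ /=.
  rewrite mulrC [A k * _]mulrC /A rmorph_sum !mulr_suml; apply: eq_bigr => i _.
  by rewrite mulr_sumr mulr_suml; apply: eq_bigr => j _; rewrite mulrC.
by apply: sumr_ge0 => k _; rewrite mulr_ge0 ?mul_conjC_ge0 ?lecR.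
Qed.

Lemma sqr_normcE (z : C) : ((ComplexField.Normc.normc z) ^+ 2)%:C = z * z^*.
Proof. by rewrite -normCK rmorphXn; case: z. Qed.

Lemma Kg_ge0 L b g : 0 <= Kg L b g.
Proof.
rewrite /Kg mulr_ge0 ?invr_ge0 ?ler0n //.
by apply/bigmin_geP; split => [|t _]; apply: sumr_ge0 => k _; apply: sqr_ge0.
Qed.

Lemma quad_CN_ge L b s0 g (x : 'cV[C]_(L %/ b)) : (0 < L)%N -> (b %| L)%N ->
  (s0 ^+ 2 * Kg L b g * L%:R ^+ 2)%:C * \sum_(j < L %/ b) x j 0 * (x j 0)^* <=
  \sum_(i < L %/ b) \sum_(j < L %/ b) CN L b s0 g i j * x j 0 * (x i 0)^*.
Proof.
move=> L_gt0 b_dvd_L; set M := (L %/ b)%N.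
have L_bM : L = (b * M)%N by rewrite mulnC divnK.
have b_gt0 : (0 < b)%N by rewrite (dvdn_gt0 L_gt0).
pose F r := \sum_(k < b) ComplexField.Normc.normc (g (r + k * M)%N) ^+ 2.
set Y := idft L b x.
have weights : \sum_(t < L) g t * (g t)^* * (Y t * (Y t)^*) =
    \sum_(r < M) (F r)%:C * (Y r * (Y r)^*).
  rewrite (sum_ord_residues (fun t => g t * (g t)^* * (Y t * (Y t)^*)) L_bM).
  apply: eq_bigr => r _.
  rewrite /F rmorph_sum /= mulr_suml; apply: eq_bigr => k _.
  by rewrite /Y (idft_periodic _ _ _ L_bM) // sqr_normcE.
have min_weight : ((b%:R * Kg L b g) * M%:R)%:C * \sum_(j < M) x j 0 * (x j 0)^* <=
    \sum_(r < M) (F r)%:C * (Y r * (Y r)^*).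
  rewrite rmorphM /= rmorph_nat -mulrA -(idft_parseval _ L_bM) // mulr_sumr.
  apply: ler_sum => r _; rewrite ler_wpM2r ?mul_conjC_ge0 // lecR.
  by rewrite /Kg mulrA mulfV ?mul1r ?pnatr_eq0 -?lt0n //; apply: bigmin_le.
have LR : (L%:R : C) = b%:R * M%:R by rewrite L_bM natrM.
have -> : (s0 ^+ 2 * Kg L b g * L%:R ^+ 2)%:C * \sum_(j < M) x j 0 * (x j 0)^* =
    (s0 ^+ 2)%:C * (L%:R * (((b%:R * Kg L b g) * M%:R)%:C *
                            \sum_(j < M) x j 0 * (x j 0)^*)).
  (* Freezing [Kg L b g] and [s0 ^+ 2] keeps [rmorphM] from unfolding them. *)
  set K := Kg L b g; set s := s0 ^+ 2.
  by rewrite !rmorphM !rmorph_nat LR; ring.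
by rewrite quad_CN // weights ler_wpM2l ?lecR ?sqr_ge0 // ler_wpM2l ?ler0n.
Qed.

Lemma quad_mulmx n (A : 'M[C]_n) (x : 'cV[C]_n) :
  \sum_(i < n) (A *m x) i 0 * (x i 0)^* =
  \sum_(i < n) \sum_(j < n) A i j * x j 0 * (x i 0)^*.
Proof. by apply: eq_bigr => i _; rewrite mxE mulr_suml. Qed.

Lemma unitmx_coercive n (A : 'M[C]_n) (c : R) : 0 < c ->
  (forall x : 'cV_n,
     c%:C * \sum_(i < n) `|x i 0| ^+ 2 <= \sum_(i < n) (A *m x) i 0 * (x i 0)^*) ->
  A \in unitmx.
Proof.
move=> c_gt0 coercive; apply: unitmx_ker0 => x Ax0.
have := coercive x; rewrite Ax0 [leRHS]big1 => [|i _]; last by rewrite !mxE mul0r.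
rewrite pmulr_rle0 ?ltcR // => norm_le0.
have sqr_norm_ge0 k : 0 <= `|x k 0| ^+ 2 by exact: exprn_ge0.
have norm0 : \sum_(i < n) `|x i 0| ^+ 2 = 0.
  by apply/le_anti; rewrite norm_le0 sumr_ge0.
apply/matrixP => i j; rewrite ord1 !mxE.
have /(_ i isT)/eqP := psumr_eq0P (fun k _ => sqr_norm_ge0 k) norm0.
by rewrite sqrf_eq0 normr_eq0 => /eqP.
Qed.

Lemma quad_CG_ge L b S s0 delta g :
  (0 < L)%N -> (b %| L)%N -> (forall k, 0 <= S k) -> forall x : 'cV[C]_(L %/ b),
  (s0 ^+ 2 * Kg L b g)%:C * \sum_(i < L %/ b) `|x i 0| ^+ 2 <=
  \sum_(i < L %/ b) (CG L b S s0 delta g *m x) i 0 * (x i 0)^*.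
Proof.
move=> L_gt0 b_dvd_L S_ge0 x; rewrite quad_mulmx.
have -> : \sum_(i < L %/ b) \sum_(j < L %/ b)
      CG L b S s0 delta g i j * x j 0 * (x i 0)^* =
    \sum_(i < L %/ b) \sum_(j < L %/ b)
      CZ L b S g (i%:R - delta) (j%:R - delta) * x j 0 * (x i 0)^* +
    \sum_(i < L %/ b) \sum_(j < L %/ b) CN L b s0 g i j * x j 0 * (x i 0)^*.
  rewrite -big_split; apply: eq_bigr => i _; rewrite -big_split.
  by apply: eq_bigr => j _; rewrite mxE !mulrDl.
apply: ler_wpDl; first exact: quad_CZ_ge0.
apply: le_trans (quad_CN_ge _ _ _ L_gt0 b_dvd_L).
under eq_bigr do rewrite normCK.
apply: ler_wpM2r; first by apply: sumr_ge0 => i _; apply: mul_conjC_ge0.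
rewrite lecR ler_peMr ?(mulr_ge0 (sqr_ge0 _) (Kg_ge0 _ _ _)) //.
by rewrite expr_ge1 // ler1n.
Qed.

End GaborCovariance.

Theorem proposition2 (R : realType) (L a b : nat) (g : nat -> R[i])
  (S : nat -> R) (sigma0 delta : R) :
  (0 < L)%N -> (a %| L)%N -> (b %| L)%N ->
  0 < Kg L b g ->
  (forall k : nat, 0 <= S k) ->
  0 < sigma0 ^+ 2 ->
  (forall x : 'cV[R[i]]_(L %/ b),
     (sigma0 ^+ 2 * Kg L b g)%:C * (\sum_(i < L %/ b) `|x i 0| ^+ 2)
       <= \sum_(i < L %/ b) (CG L b S sigma0 delta g *m x) i 0 * (x i 0)^*)
  /\ CG L b S sigma0 delta g \in unitmx.
Proof.
move=> L_gt0 _ b_dvd_L Kg_gt0 S_ge0 sigma0_gt0.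
have coercive := @quad_CG_ge R L b S sigma0 delta g L_gt0 b_dvd_L S_ge0.
split=> //; apply: (unitmx_coercive _ coercive).
exact: mulr_gt0.
Qed.
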